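(* Any instance of \textsc{Virtual Edge Steiner Tree} with $k$ terminals and $\ell$ virtual edges can be reduced to $4^{\ell}$ instances of \textsc{Steiner Tree}, each with at most $k+2\ell$ terminals; that is, the minimum total cost of the \textsc{Virtual Edge Steiner Tree} instance is obtained as the minimum, over these $4^\ell$ instances, of the optimum of the \textsc{Steiner Tree} instance plus the corresponding virtual edge weights.
   Context: \textsc{Steiner Tree}: given a graph with nonnegative edge weights and a terminal set $T$, find a minimum-weight edge set connecting all terminals. \textsc{Virtual Edge Steiner Tree}: the input is a graph $G=(V,E)$ (parallel edges allowed, no loops) with weights $w_e\in\mathbb{R}_{\ge0}$ for $e\in E$, a set of terminals $T\subseteq V$, and a set $E^*$ of ``virtual edges'' (pairs $\{u,v\}$ of vertices, with $E\cap E^*=\emptyset$), each virtual edge $e^*=\{u,v\}$ having a weight function $w_{e^*}:\{u,v,\mathsf{d},\mathsf{c}\}\to\mathbb{R}_{\ge0}$. A solution is a set $S\subseteq E\cup E^*$ forming a tree (Steiner tree) with $T\subseteq V(S)$ and $V(S)\cap e^*\neq\emptyset$ for each $e^*\in E^*$, where $V(S)$ is the set of vertices covered by $S$. The cost $c_{e^*}(S)$ of $e^*=\{u,v\}$ is $w_{e^*}(u)$ if $u\in V(S),v\notin V(S)$; $w_{e^*}(v)$ if $v\in V(S),u\notin V(S)$; $w_{e^*}(\mathsf{c})$ if $e^*\in S$; and $w_{e^*}(\mathsf{d})$ if $u,v\in V(S)$ and $e^*\notin S$. The total cost is $c(S)=\sum_{e\in S\cap E}w_e+\sum_{e^*\in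 E^*}c_{e^*}(S)$, to be minimized. *)

From HB Require Import structures.
From mathcomp Require Import all_boot all_order all_algebra.
Set Implicit Arguments. Unset Strict Implicit. Unset Printing Implicit Defensive.
Import Order.TTheory GRing.Theory Num.Theory.
Local Open Scope ring_scope.

(* The four possible "states" of a virtual edge e* = {u,v} with u = first
   component, v = second component of its endpoint pair:
   VU : u in V(S), v notin V(S)   (cost w_{e*}(u))
   VV : v in V(S), u notin V(S)   (cost w_{e*}(v))
   VD : u,v in V(S), e* notin S   (cost w_{e*}(d))
   VC : e* in S                   (cost w_{e*}(c)) *)
Inductive vstate := VU | VV | VD | VC.

Definition vstate_to (s : vstate) : 'I_4 :=
  match s with VU => inord 0 | VV => inord 1 | VD => inord 2 | VC => inord 3 end.
Definition vstate_from (i : 'I_4) : vstate :=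
  match val i with 0 => VU | 1 => VV | 2 => VD | _ => VC end.
Lemma vstate_toK : cancel vstate_to vstate_from.
Proof. by case; rewrite /vstate_from /= inordK. Qed.
HB.instance Definition _ := Finite.copy vstate (can_type vstate_toK).

Definition is_min (R : realFieldType) (P : R -> Prop) (x : R) :=
  P x /\ forall y, P y -> x <= y.

Section Graphs.
Variables (V X : finType) (ends : X -> V * V).

Definition adj (F : {set X}) : rel V :=
  fun x y => [exists e in F, (ends e == (x, y)) || (ends e == (y, x))].

Definition acyclic (F : {set X}) :=
  forall e, e \in F -> ~~ connect (adj (F :\ e)) (ends e).1 (ends e).2.

(* (W, F) is a tree (the empty graph is allowed) *)
Definition is_tree (W : {set V}) (F : {set X}) :=
  [/\ forall e, e \in F -> ((ends e).1 \in W) && ((ends e).2 \in W),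
      forall x y, x \in W -> y \in W -> connect (adj F) x y
    & acyclic F].
End Graphs.

Section Steiner.
Variables (R : realFieldType) (V E : finType) (ends : E -> V * V) (w : E -> R)
          (A : {set E}) (Tm : {set V}).
Definition steiner_feasible (F : {set E}) :=
  F \subset A /\ forall t1 t2, t1 \in Tm -> t2 \in Tm -> connect (adj ends F) t1 t2.
Definition steiner_opt (x : R) :=
  is_min (fun y => exists F, steiner_feasible F /\ y = \sum_(e in F) w e) x.
End Steiner.

Section VEST.
Variables (R : realFieldType) (V E Es : finType) (ends : E -> V * V) (w : E -> R)
          (T : {set V}) (vends : Es -> V * V) (vw : Es -> vstate -> R).

Definition allends (x : E + Es) : V * V :=
  match x with inl e => ends e | inr f => vends f end.

Definition vstate_in (W : {set V}) (S : {set E + Es}) (f : Es) : vstate :=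
  if inr f \in S then VC
  else if (vends f).1 \in W then (if (vends f).2 \in W then VD else VU)
  else VV.

Definition vest_feasible (W : {set V}) (S : {set E + Es}) :=
  [/\ is_tree allends W S, T \subset W
    & forall f, ((vends f).1 \in W) || ((vends f).2 \in W)].

Definition vest_cost (W : {set V}) (S : {set E + Es}) : R :=
  \sum_(e : E | inl e \in S) w e + \sum_(f : Es) vw f (vstate_in W S f).

Definition vest_opt (x : R) :=
  is_min (fun y => exists W S, vest_feasible W S /\ y = vest_cost W S) x.

Definition in1 (s : vstate) := s != VV.
Definition in2 (s : vstate) := s != VU.

(* vertices forced outside V(S): they are deleted *)
Definition deleted (g : {ffun Es -> vstate}) : {set V} :=
  [set v | [exists f, ((g f == VU) && (v == (vends f).2))
                   || ((g f == VV) && (v == (vends f).1))]].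

(* vertices forced inside V(S): they become terminals *)
Definition required (g : {ffun Es -> vstate}) : {set V} :=
  T :|: [set v | [exists f, (in1 (g f) && (v == (vends f).1))
                         || (in2 (g f) && (v == (vends f).2))]].

(* virtual edges guessed to be in S: they are contracted *)
Definition cedges (g : {ffun Es -> vstate}) : {set Es} := [set f | g f == VC].
Definition crep (g : {ffun Es -> vstate}) : V -> V := fingraph.root (adj vends (cedges g)).

(* the Steiner Tree instance: graph G - deleted vertices, with the guessed
   virtual edges contracted (vertices replaced by class representatives) *)
Definition red_ends (g : {ffun Es -> vstate}) (e : E) : V * V :=
  (crep g (ends e).1, crep g (ends e).2).
Definition red_edges (g : {ffun Es -> vstate}) : {set E} :=
  [set e | ((ends e).1 \notin deleted g) && ((ends e).2 \notin deleted g)].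
Definition red_terms (g : {ffun Es -> vstate}) : {set V} := crep g @: required g.

(* guesses that are self-contradictory are discarded *)
Definition guess_valid (g : {ffun Es -> vstate}) :=
  acyclic vends (cedges g) /\ [disjoint deleted g & required g].

Definition guess_weight (g : {ffun Es -> vstate}) : R := \sum_(f : Es) vw f (g f).
End VEST.

(* Guess, for every virtual edge, which of its four cost cases occurs.  A guess g
   fixes the endpoints that must lie in the tree (they become terminals), those that
   must not (they are deleted) and the virtual edges that are used (they are
   contracted); the virtual costs are then the constant [guess_weight g].

   A solution (W, S) realizes its own guess g, and its ordinary edges connect the
   terminals of the g-reduced instance at the same total cost.  Conversely, undo the
   contraction in a solution F of the g-reduced instance of a consistent guess g and
   keep a minimal B ⊆ F that still connects all required vertices.  Minimality makes
   every edge of B a bridge reachable from the required vertices, so B together with the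
   forest of contracted virtual edges is a tree on the set W of vertices reachable from
   them.  Deleted vertices are never reached, hence this tree realizes exactly the
   guess g, at a cost not exceeding that of F.  The two sets of values thus dominate
   each other and have the same minimum. *)

From HB Require Import structures.
From mathcomp Require Import all_boot all_order all_algebra.
Import Order.TTheory GRing.Theory Num.Theory.

Set Implicit Arguments. Unset Strict Implicit. Unset Printing Implicit Defensive.

Section Multigraph.
Variables (V X : finType) (ends : X -> V * V).
Implicit Types (F G : {set X}) (U : {set V}).

Definition bridge F e := ~~ connect (adj ends (F :\ e)) (ends e).1 (ends e).2.

Definition spans F U := [forall x in U, forall y in U, connect (adj ends F) x y].

Definition reach F U : {set V} := [set v | [exists u in U, connect (adj ends F) u v]].

Lemma adjC F : symmetric (adj ends F).
Proof. by move=> x y; apply: eq_existsb => e; rewrite orbC. Qed.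

Lemma adj_sym F : connect_sym (adj ends F).
Proof. exact/sym_connect_sym/adjC. Qed.

Lemma connect_ends F e : e \in F -> connect (adj ends F) (ends e).1 (ends e).2.
Proof. by move=> eF; apply/connect1/existsP; exists e; rewrite eF -surjective_pairing eqxx. Qed.

Lemma connect_subset F G : F \subset G -> subrel (connect (adj ends F)) (connect (adj ends G)).
Proof.
move=> sFG; apply: connect_sub => x y /existsP[e /andP[eF He]].
by apply/connect1/existsP; exists e; rewrite (subsetP sFG).
Qed.

Lemma adj_setD1 F e x y :
  adj ends F x y -> adj ends (F :\ e) x y \/ (ends e = (x, y) \/ ends e = (y, x)).
Proof.
case/existsP=> e' /andP[e'F He']; have [<- | ne'] := eqVneq e' e.
  by right; case/orP: He' => /eqP ->; [left | right].
by left; apply/existsP; exists e'; rewrite !inE ne' e'F.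
Qed.

Lemma connect_setD1 F e x y :
  connect (adj ends F) x y ->
  connect (adj ends (F :\ e)) x y \/
  ((connect (adj ends (F :\ e)) x (ends e).1 \/ connect (adj ends (F :\ e)) x (ends e).2) /\
   (connect (adj ends (F :\ e)) (ends e).1 y \/ connect (adj ends (F :\ e)) (ends e).2 y)).
Proof.
case/connectP=> p + ->; elim: p x => [|z p IHp] x /=; first by left.
case/andP=> /(adj_setD1 e) [xz | exz] /IHp {IHp} zy.
  case: zy => [zy | [[zl | zl] zr]]; first by left; apply: connect_trans (connect1 xz) zy.
  - by right; split => //; left; apply: connect_trans (connect1 xz) zl.
  - by right; split => //; right; apply: connect_trans (connect1 xz) zl.
right; split; first by case: exz => ->; [left | right].
by case: zy => [zy | [_ //]]; case: exz => ->; [right | left].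
Qed.

Lemma bridge_subset F G e : F \subset G -> bridge G e -> bridge F e.
Proof.
move=> sFG; apply: contra; apply: connect_subset.
by apply/subsetP => z /setD1P[ze /(subsetP sFG) zG]; rewrite !inE ze.
Qed.

Lemma acyclic_subset F G : F \subset G -> acyclic ends G -> acyclic ends F.
Proof. by move=> sFG acG e eF; apply: bridge_subset sFG (acG e (subsetP sFG e eF)). Qed.

Lemma acyclic_setU1 F e : acyclic ends F -> bridge (e |: F) e -> acyclic ends (e |: F).
Proof.
move=> acF bre f; case/setU1P => [-> // | fF].
have [-> // | nfe] := eqVneq f e.
have sub : ((e |: F) :\ f) :\ e \subset (e |: F) :\ e.
  by apply/subsetP => z; rewrite !inE => /and3P[-> _ ->].
have sub' : ((e |: F) :\ f) :\ e \subset F :\ f.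
  apply/subsetP => z; rewrite !inE => /and3P[/negPf ze -> /orP[/eqP zeE | ->]] //.
  by rewrite zeE eqxx in ze.
have /negP nf := acF f fF; have /negP nb := bre.
set D := connect (adj ends ((e |: F) :\ e)) in nb.
have Dsub : subrel (connect (adj ends (((e |: F) :\ f) :\ e))) D by apply: connect_subset sub.
have Dff : D (ends f).1 (ends f).2 by apply: connect_ends; rewrite !inE nfe fF orbT.
have Dsym : symmetric D by apply: adj_sym.
have Dtr : transitive D by apply: connect_trans.
apply/negP => /(connect_setD1 e) [ff | [[l | l] [r | r]]].
- exact/nf/(connect_subset sub' ff).
- exact/nf/(connect_subset sub' (connect_trans l r)).
- apply: nb; rewrite Dsym; move: Dff; rewrite Dsym => Dff.
  exact: Dtr _ _ _ (Dsub _ _ r) (Dtr _ _ _ Dff (Dsub _ _ l)).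
- apply: nb; move: Dff; rewrite Dsym => Dff.
  exact: Dtr _ _ _ (Dsub _ _ r) (Dtr _ _ _ Dff (Dsub _ _ l)).
- exact/nf/(connect_subset sub' (connect_trans l r)).
Qed.

Lemma acyclic_setU (A B : {set X}) :
  acyclic ends A -> (forall e, e \in B -> bridge (A :|: B) e) -> acyclic ends (A :|: B).
Proof.
move: {2}#|B| (leqnn #|B|) => n; elim: n B => [|n IHn] B leBn acA brB.
  by move: leBn; rewrite leqn0 cards_eq0 => /eqP->; rewrite setU0.
have [-> | [e eB]] := set_0Vmem B; first by rewrite setU0.
have -> : A :|: B = e |: (A :|: B :\ e) by rewrite setUCA setD1K.
apply: acyclic_setU1; last by rewrite setUCA setD1K // brB.
apply: IHn => [|//|f /setD1P[_ fB]]; first by rewrite (cardsD1 e) eB in leBn.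
by apply: bridge_subset (brB f fB); rewrite setUS // subD1set.
Qed.

Lemma spansP F U :
  reflect (forall x y, x \in U -> y \in U -> connect (adj ends F) x y) (spans F U).
Proof.
apply: (iffP forall_inP) => [sp x y xU yU | sp x xU]; first exact: forall_inP (sp x xU) y yU.
by apply/forall_inP => y; apply: sp.
Qed.

Lemma spans_setD1_nonbridge F U e : ~~ bridge F e -> spans F U -> spans (F :\ e) U.
Proof.
move=> /negbNE ee /spansP sp; apply/spansP => x y xU yU.
have Dtr : transitive (connect (adj ends (F :\ e))) by apply: connect_trans.
case: (connect_setD1 e (sp x y xU yU)) => [// | [[l | l] [r | r]]].
- exact: Dtr l r.
- exact: Dtr l (Dtr _ _ _ ee r).
- by apply: Dtr l (Dtr _ _ _ _ r); rewrite adj_sym.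
- exact: Dtr l r.
Qed.

Lemma spans_setD1_unreached F U e :
  e \in F -> (ends e).1 \notin reach F U -> spans F U -> spans (F :\ e) U.
Proof.
move=> eF; rewrite inE => /exists_inPn unreached /spansP sp; apply/spansP => x y xU yU.
case: (connect_setD1 e (sp x y xU yU)) => [// | [[l | l] _]]; case/negP: (unreached x xU).
  by apply: connect_subset l; apply: subD1set.
apply: connect_trans (connect_subset (subD1set F e) l) _.
by rewrite adj_sym connect_ends.
Qed.

Lemma sub_reach F U : U \subset reach F U.
Proof. by apply/subsetP => u uU; rewrite inE; apply/exists_inP; exists u. Qed.

Lemma is_tree_reach F U :
  spans F U -> (forall e, e \in F -> (ends e).1 \in reach F U) -> acyclic ends F ->
  is_tree ends (reach F U) F.
Proof.
move=> /spansP sp reachF acF; split=> // [e eF | x y].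
  have e1F := reachF e eF; rewrite e1F; move: e1F; rewrite !inE.
  case/exists_inP=> u uU ue1; apply/exists_inP; exists u => //.
  exact: connect_trans ue1 (connect_ends eF).
rewrite !inE => /exists_inP[u uU ux] /exists_inP[v vU vy].
by apply: connect_trans (connect_trans (sp u v uU vU) vy); rewrite adj_sym.
Qed.

Section Relabel.
Variables (Y : finType) (endsY : Y -> V * V) (h : X -> Y).
Hypothesis endsYh : forall x, endsY (h x) = ends x.

Lemma adj_imset F : adj endsY (h @: F) =2 adj ends F.
Proof.
move=> x y; apply/existsP/existsP => [[_ /andP[/imsetP[e eF ->]]] | [e /andP[eF]]].
  by rewrite endsYh => exy; exists e; rewrite eF.
by rewrite -endsYh => exy; exists (h e); rewrite imset_f.
Qed.

Lemma acyclic_imset F : injective h -> acyclic endsY (h @: F) <-> acyclic ends F.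
Proof.
move=> inj_h; have hD1 e : (h @: F) :\ h e = h @: (F :\ e).
  apply/setP => y; apply/setD1P/imsetP => [[ye /imsetP[x xF yx]] | [x /setD1P[xe xF] ->]].
    by exists x; rewrite // !inE xF andbT; apply: contraNneq ye => <-; rewrite yx.
  by rewrite (inj_eq inj_h) imset_f.
rewrite /acyclic /bridge; split=> acF e.
  by move=> eF; have := acF (h e); rewrite imset_f // hD1 endsYh (eq_connect (adj_imset _)); apply.
case/imsetP=> x xF ->; rewrite hD1 endsYh (eq_connect (adj_imset _)); exact: acF.
Qed.
End Relabel.

End Multigraph.

Lemma connect_homo (T T' : finType) (h : T -> T') (e : rel T) (e' : rel T') :
  (forall a b, e a b -> connect e' (h a) (h b)) ->
  forall x y, connect e x y -> connect e' (h x) (h y).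
Proof.
move=> he x _ /connectP[p + ->]; elim: p x => [|z p IHp] x //= /andP[exz /IHp].
exact: connect_trans (he _ _ exz).
Qed.

Lemma steiner_feasibleP (V E : finType) (ends : E -> V * V) (A F : {set E}) (Tm : {set V}) :
  steiner_feasible ends A Tm F <-> (F \subset A) && spans ends F Tm.
Proof. by split=> [[-> /spansP] | /andP[? /spansP]]. Qed.

Local Open Scope ring_scope.

Lemma sumr_le_subset (R : numDomainType) (I : finType) (A B : {set I}) (F : I -> R) :
  (forall i, 0 <= F i) -> A \subset B -> \sum_(i in A) F i <= \sum_(i in B) F i.
Proof.
move=> F_ge0 sAB; rewrite [leRHS](big_setID A) (setIidPr sAB) lerDl.
by apply: sumr_ge0 => i _.
Qed.

Lemma is_min_dominate (R : realFieldType) (P Q : R -> Prop) :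
  (forall x, P x -> exists2 y, Q y & y <= x) ->
  (forall y, Q y -> exists2 x, P x & x <= y) ->
  forall m, is_min P m <-> is_min Q m.
Proof.
suff min_dom (P' Q' : R -> Prop) : (forall x, P' x -> exists2 y, Q' y & y <= x) ->
    (forall y, Q' y -> exists2 x, P' x & x <= y) -> forall m, is_min P' m -> is_min Q' m.
  by move=> PQ QP m; split; apply: min_dom.
move=> PQ QP m [Pm m_min]; have [y Qy le_ym] := PQ m Pm.
have [x Px le_xy] := QP y Qy.
have ym : y = m by apply/eqP; rewrite eq_le le_ym (le_trans (m_min x Px) le_xy).
split=> [|y' /QP[x' Px' le_xy']]; first by rewrite -ym.
exact: le_trans (m_min x' Px') le_xy'.
Qed.

Lemma steiner_opt_exists (R : realFieldType) (V E : finType) (ends : E -> V * V) (w : E -> R)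
    (A : {set E}) (Tm : {set V}) F0 :
  steiner_feasible ends A Tm F0 ->
  exists2 o, steiner_opt ends w A Tm o & o <= \sum_(e in F0) w e.
Proof.
move=> /steiner_feasibleP F0f.
pose P (F : {set E}) := (F \subset A) && spans ends F Tm.
case: (@arg_minP _ _ _ _ P (fun F => \sum_(e in F) w e) F0f) => F /steiner_feasibleP Ff F_min.
exists (\sum_(e in F) w e); last exact: F_min.
by split=> [|_ [F' [/steiner_feasibleP F'f ->]]]; [exists F | exact: F_min].
Qed.

(* The equality of [vstate] is inherited from ['I_4] and does not compute. *)
Lemma vstate_eqE (a b : vstate) :
  (a == b) = match a, b with VU, VU | VV, VV | VD, VD | VC, VC => true | _, _ => false end.
Proof. by apply/eqP/idP; case: a; case: b. Qed.

Lemma card_vstate : #|{: vstate}| = 4%N.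
Proof.
rewrite (bij_eq_card (f := vstate_to)) ?card_ord //.
exists vstate_from; first exact: vstate_toK.
by move=> [[|[|[|[|n]]]] lt_n4] //; apply: val_inj; rewrite /= inordK.
Qed.

Section Reduction.
Variables (R : realFieldType) (V E Es : finType) (ends : E -> V * V) (w : E -> R).
Variables (T : {set V}) (vends : Es -> V * V) (vw : Es -> vstate -> R).
Local Notation allends := (allends ends vends).

Lemma acyclic_inr (C : {set Es}) : acyclic allends (inr @: C) <-> acyclic vends C.
Proof. exact: (@acyclic_imset _ _ vends _ allends inr (fun=> erefl) C inr_inj). Qed.

Section Guess.
Variable g : {ffun Es -> vstate}.
Local Notation req := (required T vends g).
Local Notation del := (deleted vends g).
Local Notation crep := (crep vends g).

Lemma required1 f : in1 (g f) -> (vends f).1 \in req.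
Proof.
by move=> gf1; rewrite !inE; apply/orP; right; apply/existsP; exists f; rewrite gf1 eqxx.
Qed.

Lemma required2 f : in2 (g f) -> (vends f).2 \in req.
Proof.
by move=> gf2; rewrite !inE; apply/orP; right; apply/existsP; exists f; rewrite gf2 eqxx orbT.
Qed.

Lemma deleted1 f : g f = VV -> (vends f).1 \in del.
Proof. by move=> gf; rewrite inE; apply/existsP; exists f; rewrite gf !eqxx orbT. Qed.

Lemma deleted2 f : g f = VU -> (vends f).2 \in del.
Proof. by move=> gf; rewrite inE; apply/existsP; exists f; rewrite gf !eqxx. Qed.

(* A solution [F] of the reduced instance seen back in G: the contraction is undone. *)
Definition lift_edges (F : {set E}) : {set E + Es} := inr @: cedges g :|: inl @: F.

Lemma mem_lift_inl F e : (inl e \in lift_edges F) = (e \in F).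
Proof. by rewrite inE (mem_imset _ _ inl_inj); case: imsetP => // -[]. Qed.

Lemma mem_lift_inr F f : (inr f \in lift_edges F) = (g f == VC).
Proof. by rewrite inE (mem_imset _ _ inr_inj) inE; case: imsetP => [[] | ]; rewrite ?orbF. Qed.

Lemma lift_edgesD1 F e : lift_edges (F :\ e) = lift_edges F :\ inl e.
Proof.
apply/setP => -[e' | f]; rewrite in_setD1 ?mem_lift_inl ?mem_lift_inr //.
by rewrite in_setD1 (inj_eq inl_inj).
Qed.

Lemma crep_connect a b : (crep a == crep b) = connect (adj vends (cedges g)) a b.
Proof. exact: (root_connect (adj_sym _ _)). Qed.

Lemma connect_crep a : connect (adj vends (cedges g)) (crep a) a.
Proof. by rewrite adj_sym; apply: connect_root. Qed.

Lemma connect_cedges_lift F :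
  subrel (connect (adj vends (cedges g))) (connect (adj allends (lift_edges F))).
Proof.
move=> a b; rewrite -(eq_connect (@adj_imset _ _ vends _ allends inr (fun=> erefl) _)).
exact/connect_subset/subsetUl.
Qed.

Lemma connect_lift_edges F x y :
  connect (adj allends (lift_edges F)) x y =
  connect (adj (red_ends ends vends g) F) (crep x) (crep y).
Proof.
apply/idP/idP.
  apply: connect_homo => a b /existsP[[e | f] /andP[]].
    rewrite mem_lift_inl => eF /= eab; apply/connect1/existsP; exists e.
    by rewrite eF /red_ends; case/orP: eab => /eqP ->; rewrite eqxx ?orbT.
  rewrite mem_lift_inr => gf /= fab; apply/eq_connect0/eqP; rewrite crep_connect.
  by apply/connect1/existsP; exists f; rewrite inE gf.
set L := connect (adj allends (lift_edges F)).
have Ltr : transitive L by apply: connect_trans.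
have CL : subrel (connect (adj vends (cedges g))) L by apply: connect_cedges_lift.
suff redL : subrel (adj (red_ends ends vends g) F) L.
  move=> /(connect_sub redL) xy.
  exact: Ltr _ _ _ (CL _ _ (connect_root _ x)) (Ltr _ _ _ xy (CL _ _ (connect_crep y))).
move=> a b /existsP[e /andP[eF eab]].
have Le : L (crep (ends e).1) (crep (ends e).2).
  apply: (Ltr _ _ _ (CL _ _ (connect_crep _)) (Ltr _ _ _ _ (CL _ _ (connect_root _ _)))).
  by apply: (@connect_ends _ _ allends _ (inl e)); rewrite mem_lift_inl.
by case/orP: eab => /eqP[<- <-]; rewrite // /L adj_sym.
Qed.

Lemma spans_lift_edges F :
  spans allends (lift_edges F) req = spans (red_ends ends vends g) F (red_terms T vends g).
Proof.
apply/spansP/spansP => sp x y.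
  by case/imsetP=> a aR -> /imsetP[b bR ->]; rewrite -connect_lift_edges; apply: sp.
by move=> xR yR; rewrite connect_lift_edges; apply: sp; apply: imset_f.
Qed.

End Guess.

Variant vstate_in_spec (W : {set V}) (S : {set E + Es}) (f : Es) : vstate -> Prop :=
  | VstateC of inr f \in S : vstate_in_spec W S f VC
  | VstateD of inr f \notin S & (vends f).1 \in W & (vends f).2 \in W : vstate_in_spec W S f VD
  | VstateU of inr f \notin S & (vends f).1 \in W & (vends f).2 \notin W : vstate_in_spec W S f VU
  | VstateV of inr f \notin S & (vends f).1 \notin W : vstate_in_spec W S f VV.

Lemma vstate_inP W S f : vstate_in_spec W S f (vstate_in vends W S f).
Proof.
rewrite /vstate_in; case: ifP => h0; first exact: VstateC.
by case: ifP => h1; [case: ifP => h2|]; constructor; rewrite ?h0 ?h1 ?h2.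
Qed.

Definition guess_of (W : {set V}) (S : {set E + Es}) : {ffun Es -> vstate} :=
  [ffun f => vstate_in vends W S f].

Section FromSolution.
Variables (W : {set V}) (S : {set E + Es}).
Local Notation g := (guess_of W S).

Lemma guess_of_VC f : (g f == VC) = (inr f \in S).
Proof.
by rewrite ffunE; case: vstate_inP => [->|/negPf->|/negPf->|/negPf->]; rewrite vstate_eqE.
Qed.

Lemma lift_edges_guess_of : lift_edges g [set e | inl e \in S] = S.
Proof. by apply/setP => -[e | f]; rewrite ?mem_lift_inr ?guess_of_VC // mem_lift_inl inE. Qed.

Lemma deleted_guess_of : [disjoint deleted vends g & W].
Proof.
rewrite disjoint_subset; apply/subsetP => v; rewrite !inE => /existsP[f].
by case/orP=> /andP[+ /eqP ->]; rewrite ffunE; case: vstate_inP; rewrite // vstate_eqE.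
Qed.

Lemma vest_cost_guess_of :
  vest_cost w vends vw W S = \sum_(e in [set e | inl e \in S]) w e + guess_weight vw g.
Proof.
rewrite /vest_cost /guess_weight; congr (_ + _); first by apply: eq_bigl => e; rewrite inE.
by apply: eq_bigr => f _; rewrite ffunE.
Qed.

Hypothesis feasibleWS : vest_feasible ends T vends W S.

Lemma required_guess_of : required T vends g \subset W.
Proof.
case: feasibleWS => -[endsS _ _] TW vendsW.
apply/subsetP => x /setUP[/(subsetP TW) // | ]; rewrite inE => /existsP[f].
have := endsS (inr f); have := vendsW f; rewrite /in1 /in2 ffunE.
case: vstate_inP => [fS _ /(_ fS) /= /andP[u v] | _ u v _ _ | _ u _ _ _ | _ /negPf-> /= v _];
  by case/orP=> /andP[+ /eqP->]; rewrite vstate_eqE // => -[].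
Qed.

Lemma guess_of_valid : guess_valid T vends g.
Proof.
split; last exact: disjointWr required_guess_of deleted_guess_of.
case: feasibleWS => -[_ _ acS] _ _; apply/acyclic_inr; apply: acyclic_subset acS.
by rewrite -[in X in _ \subset X]lift_edges_guess_of subsetUl.
Qed.

Lemma guess_of_steiner_feasible :
  steiner_feasible (red_ends ends vends g) (red_edges ends vends g) (red_terms T vends g)
    [set e | inl e \in S].
Proof.
case: feasibleWS => -[endsS connW _] _ _; apply/steiner_feasibleP/andP; split.
  have nd x : x \in W -> x \notin deleted vends g.
    by move=> xW; rewrite (disjointFl deleted_guess_of).
  by apply/subsetP => e; rewrite inE => /endsS /andP[u v]; rewrite inE !nd.
rewrite -spans_lift_edges lift_edges_guess_of; apply/spansP => x y xR yR.
by apply: connW; apply: (subsetP required_guess_of).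
Qed.
End FromSolution.

Section FromGuess.
Variable g : {ffun Es -> vstate}.
Hypothesis g_valid : guess_valid T vends g.
Variable B : {set E}.
Hypothesis B_red : B \subset red_edges ends vends g.
Hypothesis B_spans : spans allends (lift_edges g B) (required T vends g).
Hypothesis B_minimal :
  forall e, e \in B -> ~~ spans allends (lift_edges g (B :\ e)) (required T vends g).

Local Notation req := (required T vends g).
Local Notation del := (deleted vends g).
Local Notation S := (lift_edges g B).
Local Notation W := (reach allends S req).

Lemma bridge_lift e : e \in B -> bridge allends S (inl e).
Proof.
move=> eB; apply: contraNN (B_minimal eB) => nb; rewrite lift_edgesD1.
by apply: spans_setD1_nonbridge B_spans; rewrite /bridge negbK.
Qed.

Lemma reach_lift e : e \in B -> (ends e).1 \in W.
Proof.
move=> eB; apply: contraNT (B_minimal eB) => unreached; rewrite lift_edgesD1.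
by apply: spans_setD1_unreached B_spans; rewrite ?mem_lift_inl.
Qed.

Lemma acyclic_lift : acyclic allends S.
Proof.
apply: acyclic_setU => [|_ /imsetP[e eB ->]]; last exact: bridge_lift.
by apply/acyclic_inr; case: g_valid.
Qed.

Lemma ends_lift_not_deleted z :
  z \in S -> ((allends z).1 \notin del) && ((allends z).2 \notin del).
Proof.
case: z => [e | f]; first by rewrite mem_lift_inl => /(subsetP B_red); rewrite inE.
case: g_valid => _ dis; rewrite mem_lift_inr => /eqP gf /=.
by rewrite !(disjointFl dis) ?required1 ?required2 // /in1 /in2 gf vstate_eqE.
Qed.

Lemma reach_lift_not_deleted v : v \in W -> v \notin del.
Proof.
rewrite inE => /exists_inP[r rR rv].
have cl : closed (adj allends S) [predC del].
  apply: (intro_closed (adj_sym _ _)) => a b /existsP[z /andP[zS]] zab _.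
  by case/andP: (ends_lift_not_deleted zS); case/orP: zab => /eqP-> /=.
by rewrite -[v \notin del](closed_connect cl rv) inE (disjointFl g_valid.2).
Qed.

Lemma mem_reach_lift1 f : ((vends f).1 \in W) = in1 (g f).
Proof.
apply/idP/idP => [|/required1/(subsetP (sub_reach _ _ _)) //].
apply: contraLR; rewrite negbK => /eqP/deleted1.
by apply: contraL; apply: reach_lift_not_deleted.
Qed.

Lemma mem_reach_lift2 f : ((vends f).2 \in W) = in2 (g f).
Proof.
apply/idP/idP => [|/required2/(subsetP (sub_reach _ _ _)) //].
apply: contraLR; rewrite negbK => /eqP/deleted2.
by apply: contraL; apply: reach_lift_not_deleted.
Qed.

Lemma vstate_in_lift f : vstate_in vends W S f = g f.
Proof.
rewrite /vstate_in mem_lift_inr mem_reach_lift1 mem_reach_lift2.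
by case: (g f); rewrite /in1 /in2 !vstate_eqE.
Qed.

Lemma vest_feasible_lift : vest_feasible ends T vends W S.
Proof.
split.
- apply: is_tree_reach => //; last exact: acyclic_lift.
  case=> [e | f] zS; first by apply: reach_lift; rewrite -(mem_lift_inl g).
  by rewrite /= mem_reach_lift1 /in1; move: zS; rewrite mem_lift_inr => /eqP->; rewrite vstate_eqE.
- by apply: subset_trans (sub_reach _ _ _); apply: subsetUl.
- by move=> f; rewrite mem_reach_lift1 mem_reach_lift2 /in1 /in2; case: (g f); rewrite !vstate_eqE.
Qed.

Lemma vest_cost_lift : vest_cost w vends vw W S = \sum_(e in B) w e + guess_weight vw g.
Proof.
rewrite /vest_cost /guess_weight; congr (_ + _); first by apply: eq_bigl => e; rewrite mem_lift_inl.
by apply: eq_bigr => f _; rewrite vstate_in_lift.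
Qed.
End FromGuess.

Lemma guess_to_vest g F :
  (forall e, 0 <= w e) -> guess_valid T vends g ->
  steiner_feasible (red_ends ends vends g) (red_edges ends vends g) (red_terms T vends g) F ->
  exists W S, vest_feasible ends T vends W S /\
              vest_cost w vends vw W S <= \sum_(e in F) w e + guess_weight vw g.
Proof.
move=> w_ge0 g_valid /steiner_feasibleP/andP[sF]; rewrite -spans_lift_edges => F_spans.
pose P (B : {set E}) := (B \subset F) && spans allends (lift_edges g B) (required T vends g).
have PF : P F by rewrite /P subxx.
case: (arg_minnP (fun B : {set E} => #|B|) PF) => B /andP[sBF B_spans] B_min.
have B_minimal e : e \in B -> ~~ spans allends (lift_edges g (B :\ e)) (required T vends g).
  move=> eB; apply/negP => spans_e; have := B_min (B :\ e).
  by rewrite /P spans_e (subset_trans (subD1set B e) sBF) (cardsD1 e B) eB ltnn => /(_ isT).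
exists (reach allends (lift_edges g B) (required T vends g)), (lift_edges g B).
have B_red := subset_trans sBF sF.
split; first by apply: vest_feasible_lift.
by rewrite (vest_cost_lift g_valid B_red) lerD2r sumr_le_subset.
Qed.

Definition vest_value (y : R) :=
  exists W S, vest_feasible ends T vends W S /\ y = vest_cost w vends vw W S.

Definition reduced_value (y : R) :=
  exists g, guess_valid T vends g /\
    exists o, steiner_opt (red_ends ends vends g) w (red_edges ends vends g)
                (red_terms T vends g) o /\ y = o + guess_weight vw g.

Lemma vest_value_dominated y : vest_value y -> exists2 y', reduced_value y' & y' <= y.
Proof.
case=> W [S [WSf ->]]; have [o o_opt le_o] := steiner_opt_exists w (guess_of_steiner_feasible WSf).
exists (o + guess_weight vw (guess_of W S)); last by rewrite vest_cost_guess_of lerD2r.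
by exists (guess_of W S); split; [exact: guess_of_valid | exists o].
Qed.

Lemma reduced_value_dominated :
  (forall e, 0 <= w e) -> forall y, reduced_value y -> exists2 y', vest_value y' & y' <= y.
Proof.
move=> w_ge0 _ [g [g_valid [o [[[F [Ff ->]] _] ->]]]].
have [W [S [WSf le_cost]]] := guess_to_vest w_ge0 g_valid Ff.
by exists (vest_cost w vends vw W S) => //; exists W, S.
Qed.

End Reduction.

Lemma card_red_terms (V Es : finType) (T : {set V}) (vends : Es -> V * V) g :
  (#|red_terms T vends g| <= #|T| + 2 * #|Es|)%N.
Proof.
apply: leq_trans (leq_imset_card _ _) _; apply: leq_trans (leq_card_setU _ _) _.
rewrite leq_add2l mul2n -addnn; set X := [set v | _].
have sX : X \subset [set (vends f).1 | f : Es] :|: [set (vends f).2 | f : Es].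
  apply/subsetP => v; rewrite inE => /existsP[f /orP[] /andP[_ /eqP->]];
    apply/setUP; [left | right]; exact: imset_f.
apply: leq_trans (subset_leq_card sX) (leq_trans (leq_card_setU _ _) _).
by rewrite leq_add // leq_imset_card.
Qed.

Theorem mainTheorem3 (R : realFieldType) (V E Es : finType)
    (ends : E -> V * V) (w : E -> R) (T : {set V})
    (vends : Es -> V * V) (vw : Es -> vstate -> R) :
  (forall e, (ends e).1 != (ends e).2) ->
  (forall f, (vends f).1 != (vends f).2) ->
  (forall e, 0 <= w e) ->
  (forall f s, 0 <= vw f s) ->
  [/\ #|{ffun Es -> vstate}| = (4 ^ #|Es|)%N,
      forall g : {ffun Es -> vstate},
        (#|red_terms T vends g| <= #|T| + 2 * #|Es|)%N
    & forall x : R,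
        vest_opt ends w T vends vw x <->
        is_min (fun y => exists g : {ffun Es -> vstate},
                  guess_valid T vends g /\
                  exists o, steiner_opt (red_ends ends vends g) w
                              (red_edges ends vends g) (red_terms T vends g) o
                            /\ y = o + guess_weight vw g) x].
Proof.
move=> _ _ w_ge0 _; split; [by rewrite card_ffun card_vstate | exact: card_red_terms |].
move=> x; apply: is_min_dominate; first exact: vest_value_dominated.
exact: reduced_value_dominated.
Qed.
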